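(* Let $\mathcal{H}$ be a complex Hilbert space and $B,C\in\mathcal{B}(\mathcal{H})$. Then $$w^2\left(\begin{bmatrix}0 & B\\ C & 0\end{bmatrix}\right)\ge \frac{1}{4\sqrt2}\Big[\|B+C^*\|^4+\|B-C^*\|^4\Big]^{1/2}\ge \frac14\max\left\{\big\||B|^2+|C^*|^2\big\|,\ \big\||B^*|^2+|C|^2\big\|\right\}.$$
   Context: $\mathcal{B}(\mathcal{H})$ is the algebra of bounded linear operators on $\mathcal{H}$ with operator norm $\|\cdot\|$. For $A\in\mathcal{B}(\mathcal{H})$, $A^*$ is the adjoint, $|A|=(A^*A)^{1/2}$, $|A^*|=(AA^* )^{1/2}$, and $w(A)=\sup_{\|x\|=1}|\langle Ax,x\rangle|$ is the numerical radius. The operator matrix $\begin{bmatrix}A&B\\C&D\end{bmatrix}$ acts on $\mathcal{H}\oplus\mathcal{H}$ by $(x_1,x_2)\mapsto(Ax_1+Bx_2,\,Cx_1+Dx_2)$; $0$ denotes the zero operator. *)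

From HB Require Import structures.
From mathcomp Require Import all_boot all_order all_algebra.
From mathcomp Require Import boolp classical_sets reals.
From mathcomp Require Import complex.
Set Implicit Arguments. Unset Strict Implicit. Unset Printing Implicit Defensive.
Import Order.TTheory GRing.Theory Num.Theory.
Local Open Scope ring_scope.
Local Open Scope classical_set_scope.
Local Open Scope complex_scope.

Section Hilbert.
Variable R : realType.

Definition is_inner_product (H : lmodType R[i]) (ip : H -> H -> R[i]) : Prop :=
  [/\ (forall (a : R[i]) (x y z : H), ip (a *: x + y) z = a * ip x z + ip y z),
      (forall x y : H, ip y x = (ip x y)^*),
      (forall x : H, 0 <= ip x x) &
      (forall x : H, ip x x = 0 -> x = 0)].

Definition ipnorm (V : Type) (ip : V -> V -> R[i]) (x : V) : R :=
  Num.sqrt (complex.Re (ip x x)).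

Definition ip_complete (H : lmodType R[i]) (ip : H -> H -> R[i]) : Prop :=
  forall u : nat -> H,
    (forall e : R, 0 < e -> exists N : nat, forall m n : nat,
        (N <= m)%N -> (N <= n)%N -> ipnorm ip (u m - u n) < e) ->
    exists l : H, forall e : R, 0 < e -> exists N : nat, forall n : nat,
        (N <= n)%N -> ipnorm ip (u n - l) < e.

Definition is_Hilbert (H : lmodType R[i]) (ip : H -> H -> R[i]) : Prop :=
  is_inner_product ip /\ ip_complete ip.

Definition is_bounded_linear (H : lmodType R[i]) (ip : H -> H -> R[i])
    (A : H -> H) : Prop :=
  (forall (a : R[i]) (x y : H), A (a *: x + y) = a *: A x + A y) /\
  exists M : R, forall x : H, ipnorm ip (A x) <= M * ipnorm ip x.

Definition is_adjoint (H : lmodType R[i]) (ip : H -> H -> R[i])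
    (A As : H -> H) : Prop :=
  forall x y : H, ip (A x) y = ip x (As y).

Definition opnorm (V : Type) (ip : V -> V -> R[i]) (A : V -> V) : R :=
  sup [set r : R | exists x : V, ipnorm ip x = 1 /\ r = ipnorm ip (A x)].

Definition numrad (V : Type) (ip : V -> V -> R[i]) (A : V -> V) : R :=
  sup [set r : R | exists x : V, ipnorm ip x = 1 /\
                   r = complex.Re `|ip (A x) x|].

Definition prod_ip (V : Type) (ip : V -> V -> R[i]) (p q : V * V) : R[i] :=
  ip p.1 q.1 + ip p.2 q.2.

Definition opmatrix (V : lmodType R[i]) (A B C D : V -> V) (p : V * V) : V * V :=
  (A p.1 + B p.2, C p.1 + D p.2).

End Hilbert.

From HB Require Import structures.
From mathcomp Require Import all_boot all_order all_algebra.
From mathcomp Require Import boolp classical_sets reals.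
From mathcomp Require Import complex.
From mathcomp Require Import ring lra.
Set Implicit Arguments. Unset Strict Implicit. Unset Printing Implicit Defensive.
Import Order.TTheory GRing.Theory Num.Theory.
Local Open Scope ring_scope.
Local Open Scope classical_set_scope.
Local Open Scope complex_scope.

(* Let T = [[0, B], [C, 0]] on H (+) H, w = w(T), a = ||B + C^*||, b = ||B - C^*||.
   All estimates use the real part Re <x, y> of the inner product, a symmetric
   real bilinear form satisfying Cauchy-Schwarz, together with the duality
   ||y|| = sup_{||u|| = 1} Re <y, u>.
   1. For unit vectors x, u, testing T on (u, x)/sqrt 2 and (u, i x)/sqrt 2 shows
      Re <(B + C^* ) x, u> <= 2w and Re <(B - C^* ) x, u> <= 2w; hence a, b <= 2w
      (opnorm_sum_le_numrad).
   2. The parallelogram identity 2 Re <B x, B u> + 2 Re <C^* x, C^* u> =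
      Re <(B + C^* ) x, (B + C^* ) u> + Re <(B - C^* ) x, (B - C^* ) u> gives
      ||B^*B + C C^*|| <= (a^2 + b^2)/2; likewise ||B B^* + C^*C|| <= (a^2 + b^2)/2,
      since B^* +- C are adjoint to B +- C^* and so have norm at most a, b
      (opnorm_gram_le_sum).
   3. The theorem follows by elementary inequalities between a, b and w
      (quartic_mean_le, square_mean_le). *)

Section RealArithmetic.
Variable R : rcfType.

Lemma le_of_sqr_le (x y : R) : 0 <= y -> x ^+ 2 <= y ^+ 2 -> x <= y.
Proof.
move=> y0 hxy; apply: (le_trans (ler_norm x)).
by rewrite -(ger0_norm y0) -!sqrtr_sqr ler_sqrt // sqr_ge0.
Qed.

Lemma quartic_mean_le (a b w : R) : 0 <= a -> 0 <= b -> a <= 2 * w -> b <= 2 * w ->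
  (4 * Num.sqrt 2)^-1 * Num.sqrt (a ^+ 4 + b ^+ 4) <= w ^+ 2.
Proof.
move=> a0 b0 aw bw; set q := Num.sqrt (2 : R).
have q0 : 0 < q by rewrite sqrtr_gt0.
have q2 : q ^+ 2 = 2 by rewrite sqr_sqrtr.
have a2 : a ^+ 2 <= 4 * w ^+ 2 by nra.
have b2 : b ^+ 2 <= 4 * w ^+ 2 by nra.
have sum4 : a ^+ 4 + b ^+ 4 <= (4 * q * w ^+ 2) ^+ 2.
  rewrite !exprMn q2; nra.
rewrite ler_pdivrMl ?mulr_gt0 //.
apply: le_of_sqr_le; first by rewrite mulr_ge0 ?sqr_ge0 ?mulr_ge0 ?ltW.
by rewrite sqr_sqrtr // addr_ge0 // exprn_ge0.
Qed.

(* Second inequality of the theorem: the power-mean inequality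
   (a^2 + b^2) / 2 <= sqrt ((a^4 + b^4) / 2), rescaled. *)
Lemma square_mean_le (a b : R) :
  4^-1 * (2^-1 * (a ^+ 2 + b ^+ 2)) <= (4 * Num.sqrt 2)^-1 * Num.sqrt (a ^+ 4 + b ^+ 4).
Proof.
set q := Num.sqrt (2 : R); set m := Num.sqrt (a ^+ 4 + b ^+ 4).
have q0 : 0 < q by rewrite sqrtr_gt0.
have q2 : q ^+ 2 = 2 by rewrite sqr_sqrtr.
have sq4 (x : R) : x ^+ 4 = (x ^+ 2) ^+ 2 by rewrite -exprM.
have m2 : m ^+ 2 = a ^+ 4 + b ^+ 4 by rewrite sqr_sqrtr // !sq4 addr_ge0 ?sqr_ge0.
have hm : q * (a ^+ 2 + b ^+ 2) <= 2 * m.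
  apply: le_of_sqr_le; first by rewrite mulr_ge0 ?sqrtr_ge0.
  rewrite !exprMn q2 m2 !sq4; have := sqr_ge0 (a ^+ 2 - b ^+ 2); nra.
have -> : 4^-1 * (2^-1 * (a ^+ 2 + b ^+ 2)) = (4 * q)^-1 * (2^-1 * (q * (a ^+ 2 + b ^+ 2))).
  by field; rewrite gt_eqF.
apply: ler_wpM2l; first by rewrite invr_ge0 mulr_ge0 // ltW.
lra.
Qed.
End RealArithmetic.

Section Suprema.
Variable R : realType.

(* Suprema of sets of nonnegative reals, allowing the empty set (whose
   supremum is 0): this is the situation of norms on a possibly trivial space. *)
Lemma sup_ge0 (E : set R) : has_ubound E -> (forall r, E r -> 0 <= r) -> 0 <= sup E.
Proof.
move=> hub E0; have [[r Er]|] := pselect (E !=set0).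
  exact: le_trans (E0 r Er) (ub_le_sup hub Er).
by move=> /set0P/negP/negbNE/eqP ->; rewrite sup0.
Qed.

Lemma sup_le (E : set R) (K : R) : 0 <= K -> ubound E K -> sup E <= K.
Proof.
move=> K0 hK; have [nE|] := pselect (E !=set0); first exact: ge_sup.
by move=> /set0P/negP/negbNE/eqP ->; rewrite sup0.
Qed.
End Suprema.

Section ComplexFacts.
Variable R : rcfType.

Lemma Re_le_norm (z : R[i]) : complex.Re z <= complex.Re `|z|.
Proof.
rewrite normc_def /=; apply: (le_trans (ler_norm _)).
by rewrite -sqrtr_sqr ler_sqrt ?addr_ge0 ?sqr_ge0 // lerDl sqr_ge0.
Qed.

Lemma Im_le_norm (z : R[i]) : complex.Im z <= complex.Re `|z|.
Proof.
rewrite normc_def /=; apply: (le_trans (ler_norm _)).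
by rewrite -sqrtr_sqr ler_sqrt ?addr_ge0 ?sqr_ge0 // lerDr sqr_ge0.
Qed.

Lemma norm_le_ReIm (z : R[i]) :
  complex.Re `|z| <= `|complex.Re z| + `|complex.Im z|.
Proof.
rewrite normc_def /=; apply: le_of_sqr_le; first by rewrite addr_ge0.
set x := complex.Re z; set y := complex.Im z.
rewrite sqr_sqrtr ?addr_ge0 ?sqr_ge0 // sqrrD -(real_normK (num_real x)).
rewrite -(real_normK (num_real y)) -addrA lerD2l lerDr.
by rewrite mulrn_wge0 // mulr_ge0.
Qed.

(* Real and imaginary parts of the quadratic form of an off-diagonal matrix
   evaluated at (r u, r x) and at (r u, r 'i x). *)
Lemma Re_offdiag_real (r : R) (z1 z2 : R[i]) :
  complex.Re (r%:C * r%:C^* * z1 + r%:C * r%:C^* * z2) =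
  r ^+ 2 * (complex.Re z1 + complex.Re z2).
Proof. by case: z1 => ? ?; case: z2 => ? ?; simpc => /=; ring. Qed.

Lemma Im_offdiag_rot (r : R) (z1 z2 : R[i]) :
  complex.Im (r%:C * 'i * r%:C^* * z1 + r%:C * (r%:C * 'i)^* * z2) =
  r ^+ 2 * (complex.Re z1 - complex.Re z2).
Proof. by case: z1 => ? ?; case: z2 => ? ?; simpc => /=; ring. Qed.
End ComplexFacts.

Section InnerProduct.
Variables (R : realType) (H : lmodType R[i]) (ip : H -> H -> R[i]).
Hypothesis hip : is_inner_product ip.

Lemma ipDl x y z : ip (x + y) z = ip x z + ip y z.
Proof. by case: hip => lin _ _ _; have := lin 1 x y z; rewrite scale1r mul1r. Qed.

Lemma ip0l z : ip 0 z = 0.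
Proof. by apply: (addIr (ip 0 z)); rewrite -ipDl !add0r. Qed.

Lemma ipZl a x z : ip (a *: x) z = a * ip x z.
Proof. by case: hip => lin _ _ _; rewrite -[a *: x]addr0 lin ip0l addr0. Qed.

Lemma ip_sym x y : ip y x = (ip x y)^*.
Proof. by case: hip. Qed.

Lemma ipZr a x z : ip z (a *: x) = a^* * ip z x.
Proof. by rewrite (ip_sym x z) (ip_sym (a *: x) z) ipZl rmorphM. Qed.

Definition re_ip x y := complex.Re (ip x y).

Lemma re_ipC x y : re_ip y x = re_ip x y.
Proof. by rewrite /re_ip ip_sym; case: (ip x y). Qed.

Lemma re_ipDl x y z : re_ip (x + y) z = re_ip x z + re_ip y z.
Proof. by rewrite /re_ip ipDl; case: (ip x z); case: (ip y z). Qed.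

Lemma re_ipDr x y z : re_ip z (x + y) = re_ip z x + re_ip z y.
Proof. by rewrite re_ipC re_ipDl !(re_ipC z). Qed.

Lemma re_ipNl x z : re_ip (- x) z = - re_ip x z.
Proof. by rewrite /re_ip -scaleN1r ipZl; case: (ip x z) => a b; simpc. Qed.

Lemma re_ipNr x z : re_ip z (- x) = - re_ip z x.
Proof. by rewrite re_ipC re_ipNl re_ipC. Qed.

Lemma re_ipZl (r : R) x z : re_ip (r%:C *: x) z = r * re_ip x z.
Proof. by rewrite /re_ip ipZl; case: (ip x z) => a b; simpc. Qed.

Lemma re_ipZr (r : R) x z : re_ip z (r%:C *: x) = r * re_ip z x.
Proof. by rewrite re_ipC re_ipZl re_ipC. Qed.

Lemma re_ip_rot x y : re_ip ('i *: x) ('i *: y) = re_ip x y.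
Proof. by rewrite /re_ip ipZl ipZr mulrA; case: (ip x y) => a b; simpc. Qed.

Lemma Im_ip x y : complex.Im (ip x y) = re_ip x ('i *: y).
Proof. by rewrite /re_ip ipZr; case: (ip x y) => a b; simpc. Qed.

Lemma ip_self x : ip x x = (re_ip x x)%:C /\ 0 <= re_ip x x.
Proof.
case: hip => _ _ + _ => /(_ x); rewrite lecE => /andP[/eqP Im0 Re0].
split=> //; move: Im0; rewrite /re_ip.
by case: (ip x x) => a b /= ->; rewrite complexr0.
Qed.

Local Notation nrm := (ipnorm ip).

Lemma nrm_ge0 x : 0 <= nrm x.
Proof. exact: sqrtr_ge0. Qed.

Lemma nrm_sqr x : nrm x ^+ 2 = re_ip x x.
Proof. by rewrite sqr_sqrtr //; case: (ip_self x). Qed.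

Lemma nrm_eq0 x : nrm x = 0 -> x = 0.
Proof.
move=> nx0; case: hip => _ _ _; apply; case: (ip_self x) => -> _.
by rewrite -nrm_sqr nx0 expr0n.
Qed.

Lemma nrm0 : nrm 0 = 0.
Proof. by rewrite /ipnorm ip0l sqrtr0. Qed.

Lemma nrmN x : nrm (- x) = nrm x.
Proof. by rewrite /ipnorm -/(re_ip _ _) re_ipNl re_ipNr opprK. Qed.

Lemma nrmZ (r : R) x : nrm (r%:C *: x) = `|r| * nrm x.
Proof.
rewrite /ipnorm -!/(re_ip _ _) re_ipZl re_ipZr mulrA -expr2.
by rewrite sqrtrM ?sqrtr_sqr // sqr_ge0.
Qed.

Lemma nrm_rot x : nrm ('i *: x) = nrm x.
Proof. by rewrite /ipnorm -!/(re_ip _ _) re_ip_rot. Qed.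

Lemma nrm_normalize x : nrm x != 0 -> nrm ((nrm x)^-1%:C *: x) = 1.
Proof. by move=> nx0; rewrite nrmZ ger0_norm ?invr_ge0 ?nrm_ge0 // mulVf. Qed.

Lemma re_ip_expand x y :
  re_ip (x - y) (x - y) = re_ip x x + re_ip y y - 2 * re_ip x y.
Proof. rewrite re_ipDl !re_ipDr !re_ipNl !re_ipNr (re_ipC y x); ring. Qed.

(* Cauchy-Schwarz for the real part, from the expansion of
   || ||y|| x - ||x|| y ||^2 >= 0. *)
Lemma cauchy_schwarz x y : re_ip x y <= nrm x * nrm y.
Proof.
have [/nrm_eq0 ->|nx0] := eqVneq (nrm x) 0; first by rewrite /re_ip ip0l nrm0 mul0r.
have [/nrm_eq0 ->|ny0] := eqVneq (nrm y) 0.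
  by rewrite re_ipC /re_ip ip0l nrm0 mulr0.
have nx : 0 < nrm x by rewrite lt_def nx0 nrm_ge0.
have ny : 0 < nrm y by rewrite lt_def ny0 nrm_ge0.
have := proj2 (ip_self ((nrm y)%:C *: x - (nrm x)%:C *: y)).
rewrite re_ip_expand !re_ipZl !re_ipZr -!nrm_sqr => h.
have : 0 <= 2 * (nrm x * nrm y) * (nrm x * nrm y - re_ip x y) by lra.
by rewrite pmulr_rge0 ?subr_ge0 // !mulr_gt0.
Qed.

Lemma abs_re_ip_le x y : `|re_ip x y| <= nrm x * nrm y.
Proof.
rewrite ler_norml cauchy_schwarz andbT.
by have := cauchy_schwarz (- x) y; rewrite re_ipNl nrmN; lra.
Qed.

Lemma nrm_triangle x y : nrm (x + y) <= nrm x + nrm y.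
Proof.
apply: le_of_sqr_le; first by rewrite addr_ge0 ?nrm_ge0.
rewrite nrm_sqr re_ipDl !re_ipDr (re_ipC x y) sqrrD !nrm_sqr mulr2n.
by have := cauchy_schwarz x y; lra.
Qed.

Lemma nrm_le_dual y K : 0 <= K -> (forall u, nrm u = 1 -> re_ip y u <= K) -> nrm y <= K.
Proof.
move=> K0 hK; have [->|ny0] := eqVneq (nrm y) 0; first by [].
have := hK _ (nrm_normalize ny0).
by rewrite re_ipZr -nrm_sqr expr2 mulrA mulVf // mul1r.
Qed.
End InnerProduct.

Section OperatorNorm.
Variables (R : realType) (H : lmodType R[i]) (ip : H -> H -> R[i]).
Hypothesis hip : is_inner_product ip.
Local Notation nrm := (ipnorm ip).

Definition lin_op (A : H -> H) : Prop :=
  forall (a : R[i]) (x y : H), A (a *: x + y) = a *: A x + A y.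

Definition bounded_by (A : H -> H) (M : R) : Prop := forall x, nrm (A x) <= M * nrm x.

Lemma lin_opZ A a x : lin_op A -> A (a *: x) = a *: A x.
Proof.
move=> lA; have A0 : A 0 = 0.
  have := lA 1 0 0; rewrite !scale1r addr0 => A00.
  by apply: (addrI (A 0)); rewrite addr0 -A00.
by rewrite -[a *: x]addr0 lA A0 addr0.
Qed.

Lemma bounded_byD A A' M M' : bounded_by A M -> bounded_by A' M' ->
  bounded_by (fun x => A x + A' x) (M + M').
Proof.
by move=> hA hA' x; apply: le_trans (nrm_triangle hip _ _) _; rewrite mulrDl lerD.
Qed.

Lemma bounded_byB A A' M M' : bounded_by A M -> bounded_by A' M' ->
  bounded_by (fun x => A x - A' x) (M + M').
Proof.
move=> hA hA' x; apply: le_trans (nrm_triangle hip _ _) _.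
by rewrite mulrDl nrmN // lerD.
Qed.

Local Notation unit_images A := [set r : R | exists x : H, nrm x = 1 /\ r = nrm (A x)].

Lemma unit_images_bounded A M : bounded_by A M -> has_ubound (unit_images A).
Proof. by move=> hA; exists M => _ [x [x1 ->]]; have := hA x; rewrite x1 mulr1. Qed.

Lemma opnorm_ge0 A M : bounded_by A M -> 0 <= opnorm ip A.
Proof.
move=> hA; apply: sup_ge0 (unit_images_bounded hA) _ => _ [x [_ ->]].
exact: nrm_ge0.
Qed.

Lemma opnorm_ub A M x : bounded_by A M -> nrm x = 1 -> nrm (A x) <= opnorm ip A.
Proof. by move=> hA x1; apply: (ub_le_sup (unit_images_bounded hA)); exists x. Qed.

Lemma opnorm_le_dual A K : 0 <= K ->
  (forall x u, nrm x = 1 -> nrm u = 1 -> re_ip ip (A x) u <= K) -> opnorm ip A <= K.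
Proof.
move=> K0 hK; apply: sup_le => // _ [x [x1 ->]].
by apply: nrm_le_dual => // u u1; apply: hK.
Qed.

Lemma adjoint_unit_le A A' M u : bounded_by A M ->
  (forall z y, re_ip ip (A z) y = re_ip ip z (A' y)) ->
  nrm u = 1 -> nrm (A' u) <= opnorm ip A.
Proof.
move=> hA adjA u1; apply: nrm_le_dual => // [|v v1]; first exact: opnorm_ge0 hA.
rewrite re_ipC // -adjA; apply: le_trans (cauchy_schwarz hip _ _) _.
by rewrite u1 mulr1 (opnorm_ub hA).
Qed.

Lemma parallelogram_re_ip p q r t :
  re_ip ip p q + re_ip ip r t =
  2^-1 * (re_ip ip (p + r) (q + t) + re_ip ip (p - r) (q - t)).
Proof. by rewrite !(re_ipDl hip, re_ipDr hip, re_ipNl hip, re_ipNr hip); field. Qed.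

(* An operator G with Re <G x, u> = Re <P x, P u> + Re <Q x, Q u> (e.g.
   G = P^*P + Q^*Q) has norm at most (a^2 + b^2)/2 when ||P + Q|| <= a and
   ||P - Q|| <= b on unit vectors. *)
Lemma opnorm_gram_le (G P Q : H -> H) (a b : R) :
  (forall x u, re_ip ip (G x) u = re_ip ip (P x) (P u) + re_ip ip (Q x) (Q u)) ->
  (forall x, nrm x = 1 -> nrm (P x + Q x) <= a) ->
  (forall x, nrm x = 1 -> nrm (P x - Q x) <= b) ->
  opnorm ip G <= 2^-1 * (a ^+ 2 + b ^+ 2).
Proof.
move=> hG ha hb; apply: opnorm_le_dual => [|x u x1 u1].
  by rewrite mulr_ge0 ?invr_ge0 ?addr_ge0 ?sqr_ge0.
have form_le (y z : H) c : nrm y <= c -> nrm z <= c -> re_ip ip y z <= c ^+ 2.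
  move=> yc zc; apply: le_trans (cauchy_schwarz hip _ _) _.
  by rewrite expr2 ler_pM ?nrm_ge0.
rewrite hG parallelogram_re_ip ler_wpM2l ?invr_ge0 // lerD //.
  by apply: form_le; apply: ha.
by apply: form_le; apply: hb.
Qed.
End OperatorNorm.

Section OffDiagonal.
Variables (R : realType) (H : lmodType R[i]) (ip : H -> H -> R[i]).
Hypothesis hip : is_inner_product ip.
Variables (B C : H -> H) (MB MC : R).
Hypotheses (lB : lin_op B) (lC : lin_op C).
Hypotheses (bB : bounded_by ip B MB) (bC : bounded_by ip C MC).

Local Notation nrm := (ipnorm ip).
Local Notation re_ip := (re_ip ip).
Local Notation T := (opmatrix (fun _ : H => 0) B C (fun _ : H => 0)).
Local Notation w := (numrad (prod_ip ip) T).

Lemma pair_nrm (p : H * H) :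
  ipnorm (prod_ip ip) p = Num.sqrt (re_ip p.1 p.1 + re_ip p.2 p.2).
Proof. by rewrite /ipnorm /prod_ip /re_ip; case: (ip p.1 p.1); case: (ip p.2 p.2). Qed.

Lemma offdiag_form (a b : R[i]) (u x : H) :
  prod_ip ip (T (a *: u, b *: x)) (a *: u, b *: x) =
  b * a^* * ip (B x) u + a * b^* * ip (C u) x.
Proof.
rewrite /prod_ip /opmatrix /= add0r addr0 (lin_opZ _ _ lB) (lin_opZ _ _ lC).
by rewrite !(ipZl hip, ipZr hip) !mulrA.
Qed.

(* <T p, p> is bounded on unit vectors, so the numerical radius is a genuine
   supremum. *)
Lemma offdiag_unit_bound (p : H * H) : ipnorm (prod_ip ip) p = 1 ->
  complex.Re `|prod_ip ip (T p) p| <= 2 * (`|MB| + `|MC|).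
Proof.
rewrite pair_nrm => /(congr1 (fun r => r ^+ 2)).
rewrite expr1n sqr_sqrtr ?addr_ge0 ?(proj2 (ip_self hip _)) // => p1.
have unit_le (y : H) : re_ip y y <= 1 -> nrm y <= 1.
  by move=> y1; rewrite /ipnorm -sqrtr1 ler_sqrt.
have n1 : nrm p.1 <= 1 by apply: unit_le; have := proj2 (ip_self hip p.2); lra.
have n2 : nrm p.2 <= 1 by apply: unit_le; have := proj2 (ip_self hip p.1); lra.
have parts_le (y v : H) K : nrm y * nrm v <= K ->
    `|complex.Re (ip y v)| + `|complex.Im (ip y v)| <= 2 * K.
  move=> yvK; rewrite (Im_ip hip) mulr2n mulrDl mul1r lerD //.
    exact: le_trans (abs_re_ip_le hip _ _) yvK.
  by apply: le_trans (abs_re_ip_le hip _ _) _; rewrite nrm_rot.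
have opbound (A : H -> H) M y v : bounded_by ip A M -> nrm y <= 1 -> nrm v <= 1 ->
    nrm (A y) * nrm v <= `|M|.
  move=> hA y1 v1; have Ay : nrm (A y) <= `|M|.
    apply: le_trans (hA y) _; apply: le_trans (ler_wpM2r (nrm_ge0 ip y) (ler_norm M)) _.
    by rewrite -[leRHS]mulr1 ler_wpM2l.
  by rewrite -[leRHS]mulr1 ler_pM ?nrm_ge0.
rewrite /prod_ip /opmatrix /= add0r addr0.
apply: le_trans (norm_le_ReIm _) _.
have := parts_le _ _ _ (opbound _ _ _ _ bB n2 n1).
have := parts_le _ _ _ (opbound _ _ _ _ bC n1 n2).
set z1 := ip (B p.2) p.1; set z2 := ip (C p.1) p.2.
have := ler_normD (complex.Re z1) (complex.Re z2).
have := ler_normD (complex.Im z1) (complex.Im z2).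
by case: z1 => ? ?; case: z2 => ? ? /=; lra.
Qed.

Local Notation radius_set :=
  [set r : R | exists p : H * H, ipnorm (prod_ip ip) p = 1 /\
                 r = complex.Re `|prod_ip ip (T p) p|].

Lemma radius_set_bounded : has_ubound radius_set.
Proof. by exists (2 * (`|MB| + `|MC|)) => _ [q [q1 ->]]; apply: offdiag_unit_bound. Qed.

Lemma numrad_ub p : ipnorm (prod_ip ip) p = 1 -> complex.Re `|prod_ip ip (T p) p| <= w.
Proof. by move=> p1; apply: (ub_le_sup radius_set_bounded); exists p. Qed.

Lemma numrad_ge0 : 0 <= w.
Proof.
apply: sup_ge0 radius_set_bounded _ => _ [p [_ ->]].
by rewrite normc_def sqrtr_ge0.
Qed.

(* Testing T against (u, x) / sqrt 2 and (u, 'i x) / sqrt 2 for unit vectors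
   x, u bounds both Re <B x, u> + Re <C u, x> and Re <B x, u> - Re <C u, x> by 2w. *)
Lemma re_offdiag_le x u : nrm x = 1 -> nrm u = 1 ->
  2^-1 * (re_ip (B x) u + re_ip (C u) x) <= w /\
  2^-1 * (re_ip (B x) u - re_ip (C u) x) <= w.
Proof.
move=> x1 u1; set s := Num.sqrt (2^-1 : R).
have s2 : s ^+ 2 = 2^-1 by rewrite sqr_sqrtr // invr_ge0.
have rx : re_ip x x = 1 by rewrite -nrm_sqr // x1 expr1n.
have ru : re_ip u u = 1 by rewrite -nrm_sqr // u1 expr1n.
have unit_pair (y : H) : re_ip y y = 1 ->
    ipnorm (prod_ip ip) (s%:C *: u, s%:C *: y) = 1.
  move=> y1; rewrite pair_nrm /= !(re_ipZl hip, re_ipZr hip) y1 ru.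
  have halves : 2^-1 + 2^-1 = 1 :> R by lra.
  by rewrite mulr1 -expr2 s2 halves sqrtr1.
split.
- have := le_trans (Re_le_norm _) (numrad_ub (unit_pair _ rx)).
  by rewrite offdiag_form Re_offdiag_real s2.
- have rix : re_ip ('i *: x) ('i *: x) = 1 by rewrite re_ip_rot.
  have := le_trans (Im_le_norm _) (numrad_ub (unit_pair _ rix)).
  by rewrite scalerA offdiag_form Im_offdiag_rot s2.
Qed.

Variables (Bs Cs : H -> H) (MCs : R).
Hypothesis bCs : bounded_by ip Cs MCs.
Hypotheses (adjB : forall x y, re_ip (B x) y = re_ip x (Bs y))
           (adjC : forall x y, re_ip (C x) y = re_ip x (Cs y)).

Lemma opnorm_sum_le_numrad :
  opnorm ip (fun x => B x + Cs x) <= 2 * w /\ opnorm ip (fun x => B x - Cs x) <= 2 * w.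
Proof.
have w2 : 0 <= 2 * w by rewrite mulr_ge0 ?numrad_ge0.
have Cs_form x u : re_ip (Cs x) u = re_ip (C u) x by rewrite adjC re_ipC.
split; apply: opnorm_le_dual => // x u x1 u1; have [hp hm] := re_offdiag_le x1 u1.
- by rewrite re_ipDl // Cs_form; lra.
- by rewrite re_ipDl // re_ipNl // Cs_form; lra.
Qed.

(* Second step: ||B^*B + C C^*|| and ||B B^* + C^*C|| are at most
   (||B + C^*||^2 + ||B - C^*||^2) / 2; for the second one B^* +- C are the
   adjoints of B +- C^*, hence have the same norms. *)
Lemma opnorm_gram_le_sum :
  let a := opnorm ip (fun x => B x + Cs x) in
  let b := opnorm ip (fun x => B x - Cs x) in
  opnorm ip (fun x => Bs (B x) + C (Cs x)) <= 2^-1 * (a ^+ 2 + b ^+ 2) /\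
  opnorm ip (fun x => B (Bs x) + Cs (C x)) <= 2^-1 * (a ^+ 2 + b ^+ 2).
Proof.
move=> a b; have adj_sym A A' : (forall x y, re_ip (A x) y = re_ip x (A' y)) ->
    forall x y, re_ip (A' x) y = re_ip x (A y).
  by move=> adjA x y; rewrite re_ipC // -adjA re_ipC.
have adjBs := adj_sym _ _ adjB; have adjCs := adj_sym _ _ adjC.
split.
  apply: (@opnorm_gram_le _ _ _ hip _ B Cs) => // [x u|x x1|x x1].
  - by rewrite re_ipDl // adjBs adjC.
  - exact: opnorm_ub (bounded_byD hip bB bCs) x1.
  - exact: opnorm_ub (bounded_byB hip bB bCs) x1.
apply: (@opnorm_gram_le _ _ _ hip _ Bs C) => // [x u|x x1|x x1].
- by rewrite re_ipDl // adjB adjCs.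
- have adj_sum z y : re_ip (B z + Cs z) y = re_ip z (Bs y + C y).
    by rewrite !(re_ipDl hip, re_ipDr hip) adjB adjCs.
  exact (adjoint_unit_le hip (bounded_byD hip bB bCs) adj_sum x1).
- have adj_diff z y : re_ip (B z - Cs z) y = re_ip z (Bs y - C y).
    by rewrite !(re_ipDl hip, re_ipDr hip, re_ipNl hip, re_ipNr hip) adjB adjCs.
  exact (adjoint_unit_le hip (bounded_byB hip bB bCs) adj_diff x1).
Qed.
End OffDiagonal.

Unset Implicit Arguments.

Theorem mainTheorem8 (R : realType) (H : lmodType R[i]) (ip : H -> H -> R[i])
  (hH : is_Hilbert ip) (B C Bs Cs : H -> H)
  (hB : is_bounded_linear ip B) (hC : is_bounded_linear ip C)
  (hBs : is_bounded_linear ip Bs) (hCs : is_bounded_linear ip Cs)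
  (adjB : is_adjoint ip B Bs) (adjC : is_adjoint ip C Cs) :
  let w := numrad (prod_ip ip) (opmatrix (fun _ => 0) B C (fun _ => 0)) in
  let mid := (4 * Num.sqrt 2)^-1 *
      Num.sqrt (opnorm ip (fun x => B x + Cs x) ^+ 4
              + opnorm ip (fun x => B x - Cs x) ^+ 4) in
  w ^+ 2 >= mid /\
  mid >= 4^-1 * Num.max (opnorm ip (fun x => Bs (B x) + C (Cs x)))
                        (opnorm ip (fun x => B (Bs x) + Cs (C x))).
Proof.
move=> w mid; have [hip _] := hH.
have [lB [MB bB]] := hB; have [lC [MC bC]] := hC; have [_ [MCs bCs]] := hCs.
have re_adjB x y : re_ip ip (B x) y = re_ip ip x (Bs y) by rewrite /re_ip adjB.
have re_adjC x y : re_ip ip (C x) y = re_ip ip x (Cs y) by rewrite /re_ip adjC.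
have [aw bw] := opnorm_sum_le_numrad hip lB lC bB bC re_adjC.
have [gram1 gram2] := opnorm_gram_le_sum hip bB bCs re_adjB re_adjC.
have a0 := opnorm_ge0 (bounded_byD hip bB bCs).
have b0 := opnorm_ge0 (bounded_byB hip bB bCs).
split; first exact: quartic_mean_le a0 b0 aw bw.
apply: le_trans (square_mean_le _ _); apply: ler_wpM2l; first by rewrite invr_ge0.
by rewrite ge_max gram1 gram2.
Qed.
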